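(* Let $m,n,p,r$ be positive integers, let $\mathcal{A}:\mathbb{C}^{m\times n}\to\mathbb{C}^p$ be a linear operator with $\delta_{4r}(\mathcal{A})\le 0.04$, let $X_0\in\mathbb{C}^{m\times n}$ with $\mathrm{rank}(X_0)\le r$, let $\nu\in\mathbb{C}^p$, and let $b=\mathcal{A}X_0+\nu$. Let $(\widehat{X}_k)_{k\ge0}$ be any sequence of estimates produced by ADMiRA with input $(\mathcal{A},b,r)$. Then for each $k\ge0$, $$\|X_0-\widehat{X}_{k+1}\|_F\le 0.5\|X_0-\widehat{X}_k\|_F+6.5\|\nu\|_2,$$ and consequently $\|X_0-\widehat{X}_k\|_F\le 2^{-k}\|X_0\|_F+13\|\nu\|_2$ for all $k\ge0$.
   Context: $\mathbb{C}^p$ has inner product $\langle x,y\rangle=y^Hx$ and norm $\|\cdot\|_2$; $\mathbb{C}^{m\times n}$ has inner product $\langle X,Y\rangle=\mathrm{tr}(Y^HX)$ and Frobenius norm $\|\cdot\|_F$; $\mathcal{A}^*$ is the adjoint of $\mathcal{A}$. For $s\ge1$, $\delta_s(\mathcal{A})$ is the smallest $\delta\ge0$ such that $(1-\delta)\|X\|_F^2\le\|\mathcal{A}X\|_2^2\le(1+\delta)\|X\|_F^2$ for all $X$ with $\mathrm{rank}(X)\le s$. The set of atoms $\mathbb{O}$ is a set of unit-Frobenius-norm rank-one matrices such that every nonzero rank-one matrix is a scalar multiple of exactly one element of $\mathbb{O}$. For $\Psi\subset\mathbb{O}$, $\mathcal{P}_\Psi$ is the orthogonal projection onto $\mathrm{span}(\Psi)$.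 ADMiRA with input $(\mathcal{A},b,r)$: set $\widehat{X}_0=0$, $\widehat{\Psi}_0=\emptyset$; for $k=0,1,2,\dots$: (1) choose $\Psi'_{k+1}$ maximizing $\|\mathcal{P}_\Psi\mathcal{A}^*(b-\mathcal{A}\widehat{X}_k)\|_F$ over $\Psi\subset\mathbb{O}$, $|\Psi|\le 2r$; (2) $\widetilde{\Psi}_{k+1}=\Psi'_{k+1}\cup\widehat{\Psi}_k$; (3) $\widetilde{X}_{k+1}$ minimizes $\|b-\mathcal{A}X\|_2$ over $X\in\mathrm{span}(\widetilde{\Psi}_{k+1})$; (4) choose $\widehat{\Psi}_{k+1}$ maximizing $\|\mathcal{P}_\Psi\widetilde{X}_{k+1}\|_F$ over $\Psi\subset\mathbb{O}$, $|\Psi|\le r$; (5) $\widehat{X}_{k+1}=\mathcal{P}_{\widehat{\Psi}_{k+1}}\widetilde{X}_{k+1}$. *)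

From HB Require Import structures.
From mathcomp Require Import all_boot all_order all_algebra.
From mathcomp Require Import complex.
From mathcomp Require Import Rstruct.
From Stdlib Require Rdefinitions.
Set Implicit Arguments. Unset Strict Implicit. Unset Printing Implicit Defensive.
Import Order.TTheory GRing.Theory Num.Theory.
Local Open Scope ring_scope.

Definition C : numClosedFieldType := (Rdefinitions.R)[i].

Definition ctrans (m n : nat) (X : 'M[C]_(m, n)) : 'M[C]_(n, m) :=
  (map_mx (@Num.conj C) X)^T.

Definition vinner (p : nat) (x y : 'cV[C]_p) : C := (ctrans y *m x) 0 0.
Definition vnorm (p : nat) (x : 'cV[C]_p) : C := sqrtC (vinner x x).

Definition minner (m n : nat) (X Y : 'M[C]_(m, n)) : C := \tr (ctrans Y *m X).
Definition fnorm (m n : nat) (X : 'M[C]_(m, n)) : C := sqrtC (minner X X).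

(* Adjoint of a linear operator A : C^{m x n} -> C^p, given entrywise:
   (A^* v)_{ij} = <v, A E_{ij}>, so that <A X, v> = <X, A^* v>. *)
Definition adjoint (m n p : nat) (A : {linear 'M[C]_(m, n) -> 'cV[C]_p})
  (v : 'cV[C]_p) : 'M[C]_(m, n) :=
  \matrix_(i, j) vinner v (A (delta_mx i j)).

Definition rip_ineq (m n p : nat) (A : {linear 'M[C]_(m, n) -> 'cV[C]_p})
  (s : nat) (d : C) : Prop :=
  forall X : 'M[C]_(m, n), (\rank X <= s)%N ->
    (1 - d) * fnorm X ^+ 2 <= vnorm (A X) ^+ 2 <= (1 + d) * fnorm X ^+ 2.

Definition is_rip_const (m n p : nat) (A : {linear 'M[C]_(m, n) -> 'cV[C]_p})
  (s : nat) (d : C) : Prop :=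
  0 <= d /\ rip_ineq A s d /\
  (forall d' : C, 0 <= d' -> rip_ineq A s d' -> d <= d').

Definition atom_set (m n : nat) (O : 'M[C]_(m, n) -> Prop) : Prop :=
  (forall Z, O Z -> fnorm Z = 1 /\ \rank Z = 1%N) /\
  (forall Y : 'M[C]_(m, n), \rank Y = 1%N ->
     exists Z, (O Z /\ exists c : C, Y = c *: Z) /\
       forall Z', O Z' -> (exists c : C, Y = c *: Z') -> Z' = Z).

Definition admissible (m n : nat) (O : 'M[C]_(m, n) -> Prop) (s : nat)
  (Psi : seq 'M[C]_(m, n)) : Prop :=
  uniq Psi /\ (forall Z, Z \in Psi -> O Z) /\ (size Psi <= s)%N.

Definition in_span (m n : nat) (Psi : seq 'M[C]_(m, n)) (Y : 'M[C]_(m, n))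
  : Prop :=
  exists c : 'I_(size Psi) -> C, Y = \sum_(i < size Psi) c i *: Psi`_i.

Definition is_proj (m n : nat) (Psi : seq 'M[C]_(m, n)) (X Y : 'M[C]_(m, n))
  : Prop :=
  in_span Psi Y /\ forall Z, in_span Psi Z -> minner (X - Y) Z = 0.

Definition maximizes_proj (m n : nat) (O : 'M[C]_(m, n) -> Prop) (s : nat)
  (V : 'M[C]_(m, n)) (Psi : seq 'M[C]_(m, n)) : Prop :=
  admissible O s Psi /\
  forall Psi2, admissible O s Psi2 ->
    forall Y Y2, is_proj Psi V Y -> is_proj Psi2 V Y2 -> fnorm Y2 <= fnorm Y.

(* Xhat is a sequence of estimates produced by ADMiRA with input (A, b, r)
   and atom set O. Psi'_{k+1} = Psi1 k, Psihat_k = Psihat k,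
   Psitilde_{k+1} = Psi1 k ++ Psihat k, Xtilde_{k+1} = Xtil k. *)
Definition admira_run (m n p : nat) (O : 'M[C]_(m, n) -> Prop)
  (A : {linear 'M[C]_(m, n) -> 'cV[C]_p}) (b : 'cV[C]_p) (r : nat)
  (Xhat : nat -> 'M[C]_(m, n)) : Prop :=
  exists (Psihat Psi1 : nat -> seq 'M[C]_(m, n)) (Xtil : nat -> 'M[C]_(m, n)),
    Xhat 0%N = 0 /\ Psihat 0%N = [::] /\
    forall k : nat,
      maximizes_proj O (2 * r) (adjoint A (b - A (Xhat k))) (Psi1 k) /\
      (in_span (Psi1 k ++ Psihat k) (Xtil k) /\
       forall X, in_span (Psi1 k ++ Psihat k) X ->
         vnorm (b - A (Xtil k)) <= vnorm (b - A X)) /\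
      maximizes_proj O r (Xtil k) (Psihat k.+1) /\
      is_proj (Psihat k.+1) (Xtil k) (Xhat k.+1).

(* All supports
   involved have at most 4r atoms, where the RIP makes A^* A a near-isometry of
   inner products. Hence the projection of the proxy A^*(b - A Xhat_k) onto the
   atoms of Psi'_{k+1}, of X0 and of Psihat_k is within d|R| + (51/50)|nu| of R;
   since Psi'_{k+1} captures at least as much of the proxy as the 2r atoms of X0
   and Psihat_k, the part of X0 outside span(Psitilde_{k+1}) has norm at most
   twice that. The least-squares step (normal equations plus RIP) loses only a
   factor 1/(1 - d) and a noise term, and the pruning step at most doubles the
   error, since the best r-term projection of Xtilde_{k+1} is at least as good
   as the one on the atoms of X0. With d <= 1/25 this gives the factor 1/2 and
   the noise constant 13/2; iterating gives the second bound. *)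

From HB Require Import structures.
From mathcomp Require Import all_boot all_order all_algebra.
From mathcomp Require Import complex Rstruct.
From mathcomp Require Import ring lra.
Set Implicit Arguments. Unset Strict Implicit. Unset Printing Implicit Defensive.
Import Order.TTheory GRing.Theory Num.Theory.
Local Open Scope ring_scope.

Local Notation K := Rdefinitions.R.

Section FrobeniusInner.
Variables a b : nat.
Implicit Types X Y Z : 'M[C]_(a, b).

Lemma minnerE X Y : minner X Y = \sum_i \sum_j X i j * (Y i j)^*.
Proof.
rewrite /minner /mxtrace.
under eq_bigr => j _ do (rewrite !mxE; under eq_bigr => k _ do rewrite !mxE mulrC).
by rewrite exchange_big.
Qed.

Lemma minnerDl X Y Z : minner (X + Y) Z = minner X Z + minner Y Z.
Proof.
rewrite !minnerE -big_split; apply: eq_bigr => i _.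
by rewrite -big_split; apply: eq_bigr => j _; rewrite mxE mulrDl.
Qed.

Lemma minnerZl c X Z : minner (c *: X) Z = c * minner X Z.
Proof.
rewrite !minnerE mulr_sumr; apply: eq_bigr => i _.
by rewrite mulr_sumr; apply: eq_bigr => j _; rewrite mxE mulrA.
Qed.

Lemma minnerC X Y : minner Y X = (minner X Y)^*.
Proof.
rewrite !minnerE rmorph_sum; apply: eq_bigr => i _.
by rewrite rmorph_sum; apply: eq_bigr => j _; rewrite rmorphM /= conjCK mulrC.
Qed.

Lemma minner_ge0 X : 0 <= minner X X.
Proof.
by rewrite minnerE; apply: sumr_ge0 => i _; apply: sumr_ge0 => j _; apply: mul_conjC_ge0.
Qed.

Lemma minner_eq0 X : minner X X = 0 -> X = 0.
Proof.
have ge0 i j : 0 <= X i j * (X i j)^* by apply: mul_conjC_ge0.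
rewrite minnerE => /eqP; rewrite psumr_eq0 => [/allP X0|i _]; last exact: sumr_ge0.
apply/matrixP => i j; rewrite mxE; move: (X0 i (mem_index_enum _)).
by rewrite psumr_eq0 // => /allP/(_ j (mem_index_enum _)); rewrite mul_conjC_eq0 => /eqP.
Qed.

Lemma minner0l Z : minner 0 Z = 0.
Proof. by rewrite -(scale0r 0) minnerZl mul0r. Qed.

Lemma minner0r Z : minner Z 0 = 0.
Proof. by rewrite minnerC minner0l conjC0. Qed.

Lemma minnerNl X Z : minner (- X) Z = - minner X Z.
Proof. by rewrite -scaleN1r minnerZl mulN1r. Qed.

Lemma minnerDr X Y Z : minner X (Y + Z) = minner X Y + minner X Z.
Proof. by rewrite minnerC minnerDl rmorphD /= -!minnerC. Qed.

Lemma minnerZr c X Y : minner X (c *: Y) = c^* * minner X Y.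
Proof. by rewrite minnerC minnerZl rmorphM /= -minnerC. Qed.

End FrobeniusInner.

Local Open Scope complex_scope.

(* All estimates are carried out in the real field K, through Re <X, Y>. *)
Definition rinner a b (X Y : 'M[C]_(a, b)) : K := complex.Re (minner X Y).
Definition sqnorm a b (X : 'M[C]_(a, b)) : K := rinner X X.
Definition rnorm a b (X : 'M[C]_(a, b)) : K := Num.sqrt (sqnorm X).

Section RealInner.
Variables a b : nat.
Implicit Types X Y Z : 'M[C]_(a, b).

Lemma rinnerC X Y : rinner X Y = rinner Y X.
Proof. by rewrite /rinner [minner X Y]minnerC; case: (minner Y X). Qed.

Lemma rinnerDl X Y Z : rinner (X + Y) Z = rinner X Z + rinner Y Z.
Proof. by rewrite /rinner minnerDl (raddfD (@complex.Re _ : Rcomplex K -> K)). Qed.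

Lemma rinnerNl X Z : rinner (- X) Z = - rinner X Z.
Proof. by rewrite /rinner minnerNl (raddfN (@complex.Re _ : Rcomplex K -> K)). Qed.

Lemma rinnerBl X Y Z : rinner (X - Y) Z = rinner X Z - rinner Y Z.
Proof. by rewrite rinnerDl rinnerNl. Qed.

Lemma rinnerZl (t : K) X Z : rinner (t%:C *: X) Z = t * rinner X Z.
Proof. by rewrite /rinner minnerZl; case: (minner X Z) => x y /=; ring. Qed.

Lemma rinnerDr X Y Z : rinner Z (X + Y) = rinner Z X + rinner Z Y.
Proof. by rewrite !(rinnerC Z) rinnerDl. Qed.

Lemma rinnerBr X Y Z : rinner Z (X - Y) = rinner Z X - rinner Z Y.
Proof. by rewrite !(rinnerC Z) rinnerBl. Qed.

Lemma rinnerZr (t : K) X Z : rinner Z (t%:C *: X) = t * rinner Z X.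
Proof. by rewrite !(rinnerC Z) rinnerZl. Qed.

Lemma rinner0l Z : rinner 0 Z = 0.
Proof. by rewrite /rinner minner0l. Qed.

Lemma rinner0r Z : rinner Z 0 = 0.
Proof. by rewrite rinnerC rinner0l. Qed.

Lemma minner_self X : minner X X = (sqnorm X)%:C.
Proof.
by have := minner_ge0 X; rewrite /sqnorm /rinner; case: (minner X X) => x y /ger0_Im /= ->.
Qed.

Lemma sqnorm_ge0 X : 0 <= sqnorm X.
Proof. by rewrite -ler0c -minner_self minner_ge0. Qed.

Lemma sqnorm_eq0 X : sqnorm X = 0 -> X = 0.
Proof. by move=> X0; apply: minner_eq0; rewrite minner_self X0. Qed.

Lemma rnorm_ge0 X : 0 <= rnorm X.
Proof. exact: sqrtr_ge0. Qed.

Lemma sqr_rnorm X : rnorm X ^+ 2 = sqnorm X.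
Proof. by rewrite sqr_sqrtr // sqnorm_ge0. Qed.

Lemma fnormE X : fnorm X = (rnorm X)%:C.
Proof. by rewrite /fnorm minner_self -sqr_rnorm rmorphXn sqrCK // ler0c rnorm_ge0. Qed.

Lemma sqnormD X Y : sqnorm (X + Y) = sqnorm X + 2 * rinner X Y + sqnorm Y.
Proof. by rewrite /sqnorm !rinnerDl !rinnerDr (rinnerC Y X); ring. Qed.

Lemma sqnormB X Y : sqnorm (X - Y) = sqnorm X - 2 * rinner X Y + sqnorm Y.
Proof. by rewrite /sqnorm !rinnerBl !rinnerBr (rinnerC Y X); ring. Qed.

Lemma sqnormZ (t : K) X : sqnorm (t%:C *: X) = t ^+ 2 * sqnorm X.
Proof. by rewrite /sqnorm rinnerZl rinnerZr mulrA. Qed.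

Lemma sqnorm_lin (u w : K) X Y :
  sqnorm (u%:C *: X + w%:C *: Y) =
  u ^+ 2 * sqnorm X + 2 * u * w * rinner X Y + w ^+ 2 * sqnorm Y.
Proof. by rewrite sqnormD !sqnormZ rinnerZl rinnerZr mulrA mulrC !mulrA. Qed.

Lemma rnormN X : rnorm (- X) = rnorm X.
Proof. by rewrite /rnorm /sqnorm rinnerNl rinnerC rinnerNl opprK. Qed.

Lemma rnorm_sym X Y : rnorm (X - Y) = rnorm (Y - X).
Proof. by rewrite -rnormN opprB. Qed.

Lemma rnorm_le X Y : (rnorm X <= rnorm Y) = (sqnorm X <= sqnorm Y).
Proof. by rewrite /rnorm ler_sqrt ?sqnorm_ge0. Qed.

Lemma rinner_le X Y : rinner X Y <= rnorm X * rnorm Y.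
Proof.
have [Y0|Yn0] := eqVneq (sqnorm Y) 0.
  by rewrite (sqnorm_eq0 Y0) rinner0r mulr_ge0 ?rnorm_ge0.
have qY : 0 < sqnorm Y by rewrite lt_def Yn0 sqnorm_ge0.
have sq : rinner X Y ^+ 2 <= sqnorm X * sqnorm Y.
  have := sqnorm_ge0 ((sqnorm Y)%:C *: X + (- rinner X Y)%:C *: Y).
  rewrite sqnorm_lin; nra.
rewrite (le_trans (ler_norm _)) // /rnorm -sqrtrM ?sqnorm_ge0 //.
by rewrite -sqrtr_sqr ler_sqrt // mulr_ge0 ?sqnorm_ge0.
Qed.

Lemma rnormD X Y : rnorm (X + Y) <= rnorm X + rnorm Y.
Proof.
rewrite -(ler_pXn2r (_ : 0 < 2)%N) ?nnegrE ?addr_ge0 ?rnorm_ge0 //.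
by rewrite sqr_rnorm sqnormD sqrrD !sqr_rnorm lerD2r lerD2l mulr_natl ler_pMn2r ?rinner_le.
Qed.

Lemma rnorm_triangle X Y Z : rnorm (X - Z) <= rnorm (X - Y) + rnorm (Y - Z).
Proof. by rewrite -[X - Z](subrKA Y) rnormD. Qed.

End RealInner.

Section SpanProjection.
Variables a b : nat.
Implicit Types (L : seq 'M[C]_(a, b)) (X Y Z P : 'M[C]_(a, b)).

Lemma span0 L : in_span L 0.
Proof. by exists (fun _ => 0); rewrite big1 // => i _; rewrite scale0r. Qed.

Lemma spanD L X Y : in_span L X -> in_span L Y -> in_span L (X + Y).
Proof.
move=> [c1 ->] [c2 ->]; exists (fun i => c1 i + c2 i).
by rewrite -big_split; apply: eq_bigr => i _; rewrite scalerDl.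
Qed.

Lemma spanZ L c X : in_span L X -> in_span L (c *: X).
Proof.
move=> [c1 ->]; exists (fun i => c * c1 i).
by rewrite scaler_sumr; apply: eq_bigr => i _; rewrite scalerA.
Qed.

Lemma spanB L X Y : in_span L X -> in_span L Y -> in_span L (X - Y).
Proof. by move=> sX sY; rewrite -scaleN1r; apply/spanD/spanZ. Qed.

Lemma span_mem L Z : Z \in L -> in_span L Z.
Proof.
move=> ZL; have iL : (index Z L < size L)%N by rewrite index_mem.
exists (fun i => (val i == index Z L)%:R).
rewrite (bigD1 (Ordinal iL)) //= eqxx scale1r nth_index // big1 ?addr0 // => i ne.
by rewrite -val_eqE /= in ne; rewrite (negbTE ne) scale0r.
Qed.

Lemma span_subset L1 L2 X : {subset L1 <= L2} -> in_span L1 X -> in_span L2 X.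
Proof.
move=> sL [c ->]; apply: (big_ind (in_span L2)); [exact: span0 | exact: spanD |].
by move=> i _; apply/spanZ/span_mem/sL/mem_nth.
Qed.

Lemma span_catl L1 L2 X : in_span L1 X -> in_span (L1 ++ L2) X.
Proof. by apply: span_subset => Z ZL; rewrite mem_cat ZL. Qed.

Lemma span_catr L1 L2 X : in_span L2 X -> in_span (L1 ++ L2) X.
Proof. by apply: span_subset => Z ZL; rewrite mem_cat ZL orbT. Qed.

Lemma span_cons z L Z : in_span (z :: L) Z ->
  exists c Z1, in_span L Z1 /\ Z = c *: z + Z1.
Proof.
case=> c ->; rewrite big_ord_recl; exists (c ord0).
exists (\sum_(i < size L) c (lift ord0 i) *: L`_i); split=> //.
by exists (fun i => c (lift ord0 i)).
Qed.

(* Gram-Schmidt: project onto span L, then correct along the component of z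
   orthogonal to span L. *)
Lemma proj_exists L X : exists Y, is_proj L X Y.
Proof.
elim: L X => [|z L IH] X.
  exists 0; split=> [|Z [c ->]]; first exact: span0.
  by rewrite big_ord0 minner0r.
have [Y [sY oY]] := IH X; have [W [sW oW]] := IH z.
have Lz Z : in_span L Z -> in_span (z :: L) Z.
  by apply: span_subset => Z' ZL; rewrite inE ZL orbT.
set w := z - W.
have [w0|wn0] := eqVneq (minner w w) 0.
  have zW : z = W by apply/eqP; rewrite -subr_eq0; apply/eqP/minner_eq0.
  exists Y; split=> [|Z /span_cons [c [Z1 [sZ1 ->]]]]; first exact: Lz.
  by apply: oY; rewrite zW; apply/spanD/sZ1/spanZ.
pose c0 := minner (X - Y) w / minner w w.
have oV V : in_span L V -> minner (X - (Y + c0 *: w)) V = 0.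
  by move=> sV; rewrite opprD addrA minnerDl minnerNl oY // minnerZl oW // mulr0 subrr.
exists (Y + c0 *: w); split.
  by apply/spanD/spanZ/spanB/Lz; [exact: Lz | apply: span_mem; rewrite mem_head |].
move=> Z /span_cons [c [Z1 [sZ1 ->]]].
rewrite minnerDr minnerZr (oV Z1 sZ1) addr0 -[z](subrK W) -/w minnerDr (oV W sW) addr0.
by rewrite opprD addrA minnerDl minnerNl minnerZl /c0 divfK // subrr mulr0.
Qed.

Lemma proj_orth L X P Z : is_proj L X P -> in_span L Z -> rinner (X - P) Z = 0.
Proof. by case=> _ oP sZ; rewrite /rinner oP. Qed.

Lemma sqnorm_proj L X P : is_proj L X P -> sqnorm X = sqnorm P + sqnorm (X - P).
Proof.
move=> pP; have -> : sqnorm X = sqnorm (P + (X - P)) by rewrite addrC subrK.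
by rewrite sqnormD [rinner P _]rinnerC (proj_orth pP) ?mulr0 ?addr0 //; case: pP.
Qed.

Lemma proj_min L X P Z : is_proj L X P -> in_span L Z ->
  sqnorm (X - P) <= sqnorm (X - Z).
Proof.
move=> pP sZ; have -> : X - Z = (X - P) + (P - Z) by rewrite subrKA.
rewrite [X in _ <= X]sqnormD (proj_orth pP); last by apply: spanB => //; case: pP.
by rewrite mulr0 addr0 lerDl sqnorm_ge0.
Qed.

Lemma proj_comp L1 L2 X Y G : {subset L1 <= L2} ->
  is_proj L2 X Y -> is_proj L1 Y G -> is_proj L1 X G.
Proof.
move=> sL [_ oY] [sG oG]; split=> // Z sZ.
have -> : X - G = (X - Y) + (Y - G) by rewrite subrKA.
by rewrite minnerDl oY ?oG ?addr0 //; apply: span_subset sZ.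
Qed.

(* A projection of larger norm leaves a smaller residual (Pythagoras), hence
   a residual no larger than the distance to anything in the other span. *)
Lemma proj_residual_le L1 L2 X G1 G2 Z :
  is_proj L1 X G1 -> is_proj L2 X G2 -> rnorm G2 <= rnorm G1 -> in_span L2 Z ->
  rnorm (X - G1) <= rnorm (X - Z).
Proof.
move=> p1 p2; rewrite !rnorm_le => le21 sZ; apply: le_trans (proj_min p2 sZ).
by rewrite -(lerD2l (sqnorm G1)) -(sqnorm_proj p1) (sqnorm_proj p2) lerD2r.
Qed.

End SpanProjection.

Section RankOneAtoms.
Variables a b : nat.
Implicit Types (L : seq 'M[C]_(a, b)) (X : 'M[C]_(a, b)).

Lemma rank_span L X :
  (forall Z, Z \in L -> \rank Z <= 1)%N -> in_span L X -> (\rank X <= size L)%N.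
Proof.
move=> rL [c ->]; rewrite -[X in (_ <= X)%N]card_ord -sum1_card.
apply: (big_ind2 (fun Y k => \rank Y <= k)%N) => [|Y1 k1 Y2 k2 le1 le2|i _].
- by rewrite mxrank0.
- exact: leq_trans (mxrank_add _ _) (leq_add le1 le2).
- exact: leq_trans (mxrank_scale _ _) (rL _ (mem_nth 0 (ltn_ord i))).
Qed.

Lemma mulmx_sum_col_row q (B : 'M[C]_(a, q)) (D : 'M[C]_(q, b)) :
  B *m D = \sum_(k < q) col k B *m row k D.
Proof.
apply/matrixP => i j; rewrite !mxE summxE; apply: eq_bigr => k _.
by rewrite mxE big_ord1 !mxE.
Qed.

Variable O : 'M[C]_(a, b) -> Prop.
Hypothesis HO : atom_set O.

Lemma atoms_spanning (s : seq 'M[C]_(a, b)) :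
  (forall T, T \in s -> \rank T <= 1)%N ->
  exists L, [/\ uniq L, (forall Z, Z \in L -> O Z), (size L <= size s)%N &
              forall T, T \in s -> in_span L T].
Proof.
elim: s => [|T s IH] rs; first by exists [::].
have [L [uL OL sL spL]] : exists L, [/\ uniq L, (forall Z, Z \in L -> O Z),
    (size L <= size s)%N & forall T, T \in s -> in_span L T].
  by apply: IH => T' sT'; apply: rs; rewrite inE sT' orbT.
have [->|Tn0] := eqVneq T 0.
  exists L; split=> //; first exact: leqW.
  by move=> T'; rewrite inE => /orP[/eqP -> | /spL]; [apply: span0 |].
have rT : \rank T = 1%N by apply/eqP; rewrite eqn_leq rs ?mem_head // lt0n mxrank_eq0.
have [Z [[OZ [c ->]] _]] := HO.2 T rT.
have [ZL | ZnL] := boolP (Z \in L).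
  exists L; split=> //; first exact: leqW.
  by move=> T'; rewrite inE => /orP[/eqP -> | /spL]; [apply/spanZ/span_mem |].
exists (Z :: L); split=> /=; [by rewrite ZnL | | by rewrite ltnS |].
  by move=> Z'; rewrite inE => /orP[/eqP -> | /OL].
have subL : {subset L <= Z :: L} by move=> Z' ZL; rewrite inE ZL orbT.
move=> T'; rewrite inE => /orP[/eqP -> | /spL]; last exact: span_subset.
by apply/spanZ/span_mem; rewrite mem_head.
Qed.

Lemma atom_span_of_rank r X :
  (\rank X <= r)%N -> exists L, admissible O r L /\ in_span L X.
Proof.
move=> rX.
pose s := [seq col k (col_base X) *m row k (row_base X) | k <- enum 'I_(\rank X)].
have rs T : T \in s -> (\rank T <= 1)%N.
  by case/mapP => k _ ->; apply: leq_trans (mxrankM_maxl _ _) (rank_leq_col _).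
have [L [uL OL sL spL]] := atoms_spanning rs.
exists L; split.
  by split=> //; split=> //; apply: leq_trans sL _; rewrite size_map size_enum_ord.
rewrite -(mulmx_base X) mulmx_sum_col_row.
apply: (big_ind (in_span L)) => [|Y1 Y2|k _]; [exact: span0 | exact: spanD |].
by apply: spL; apply: map_f; rewrite mem_enum.
Qed.

End RankOneAtoms.

Lemma vnormE p (x : 'cV[C]_p) : vnorm x = fnorm x.
Proof. by rewrite /vnorm /fnorm /vinner /minner trace_mx11. Qed.

Lemma adjointP m n p (A : {linear 'M[C]_(m, n) -> 'cV[C]_p}) w X :
  minner (adjoint A w) X = minner w (A X).
Proof.
have minner_sumr k (F : 'I_k -> 'cV[C]_p) : minner w (\sum_i F i) = \sum_i minner w (F i).
  exact: (big_morph _ (minnerDr w) (minner0r w)).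
rewrite {2}(matrix_sum_delta X) linear_sum minner_sumr minnerE.
apply: eq_bigr => i _; rewrite linear_sum minner_sumr; apply: eq_bigr => j _.
by rewrite linearZ minnerZr /adjoint mxE /vinner /minner trace_mx11 mulrC.
Qed.

Lemma complex_ge0_real (z : C) : 0 <= z -> z = (complex.Re z)%:C.
Proof. by case: z => x y /ger0_Im /= ->. Qed.

Lemma real_complex_ratio (i j : nat) : (i%:R / j%:R : C) = (i%:R / j%:R : K)%:C.
Proof. by rewrite fmorph_div !rmorph_nat. Qed.

Section RestrictedIsometry.
Variables m n p : nat.
Variable A : {linear 'M[C]_(m, n) -> 'cV[C]_p}.

Lemma rip_ineq_real s (d : C) : 0 <= d -> rip_ineq A s d ->
  forall X, (\rank X <= s)%N ->
  (1 - complex.Re d) * sqnorm X <= sqnorm (A X) /\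
  sqnorm (A X) <= (1 + complex.Re d) * sqnorm X.
Proof.
move=> /complex_ge0_real dE rip X /rip; rewrite {1 2}dE !vnormE !fnormE -!rmorphXn.
by rewrite !sqr_rnorm -[1]/(1%:C) -rmorphB -rmorphD -!rmorphM !lecR => /andP.
Qed.

Variables (L : seq 'M[C]_(m, n)) (d : K).
Hypothesis ripL : forall Y, in_span L Y ->
  (1 - d) * sqnorm Y <= sqnorm (A Y) /\ sqnorm (A Y) <= (1 + d) * sqnorm Y.

(* Polarization: apply the RIP to ||w|| u + ||u|| w and ||w|| u - ||u|| w. *)
Lemma rip_rinner_le u w : in_span L u -> in_span L w ->
  rinner (A u) (A w) - rinner u w <= d * rnorm u * rnorm w.
Proof.
move=> su sw; set al := rnorm u; set be := rnorm w.
have [al0|alp] := eqVneq al 0.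
  have -> : u = 0 by apply: sqnorm_eq0; rewrite -sqr_rnorm -/al al0 expr0n.
  by rewrite linear0 !rinner0l subrr al0 mulr0 mul0r.
have [be0|bep] := eqVneq be 0.
  have -> : w = 0 by apply: sqnorm_eq0; rewrite -sqr_rnorm -/be be0 expr0n.
  by rewrite linear0 !rinner0r subrr be0 mulr0.
have ab0 : 0 < al * be by rewrite mulr_gt0 // lt_def ?alp ?bep rnorm_ge0.
have [_ up] := ripL (spanD (spanZ be%:C su) (spanZ al%:C sw)).
have [lo _] := ripL (spanD (spanZ be%:C su) (spanZ (- al)%:C sw)).
move: up lo; rewrite !linearD !linearZ /= !sqnorm_lin -!sqr_rnorm -/al -/be => up lo.
by rewrite -(ler_pM2l ab0); lra.
Qed.

End RestrictedIsometry.

(* The minimum of t |-> t^2 q - 2 t c is negative unless c = 0; it is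
   attained near t = c / (q + 1). *)
Lemma quadratic_ge0_eq0 (c q : K) :
  0 <= q -> (forall t, 0 <= t ^+ 2 * q - 2 * t * c) -> c = 0.
Proof.
move=> q0 ge0; set s := (q + 1)^-1.
have s0 : 0 < s by rewrite invr_gt0; lra.
have sq : s * q = 1 - s.
  have : s * (q + 1) = 1 by rewrite mulVf // gt_eqF //; lra.
  rewrite mulrDr mulr1; lra.
have E : (c * s) ^+ 2 * q - 2 * (c * s) * c = - (c ^+ 2 * (s * (1 + s))).
  by transitivity (c ^+ 2 * s * (s * q - 2)); [ring | rewrite sq; ring].
have := ge0 (c * s); rewrite E oppr_ge0 pmulr_lle0 ?mulr_gt0 //; last lra.
by move=> c2; apply/eqP; rewrite -sqrf_eq0 eq_le c2 sqr_ge0.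
Qed.

Lemma least_squares_orth m n p (A : {linear 'M[C]_(m, n) -> 'cV[C]_p}) b L Xt Z :
  in_span L Xt -> (forall X, in_span L X -> vnorm (b - A Xt) <= vnorm (b - A X)) ->
  in_span L Z -> rinner (b - A Xt) (A Z) = 0.
Proof.
move=> sXt minXt sZ; apply: (quadratic_ge0_eq0 (sqnorm_ge0 (A Z))) => t.
have := minXt _ (spanD sXt (spanZ t%:C sZ)).
rewrite !vnormE !fnormE lecR rnorm_le linearD linearZ /= opprD addrA.
set r0 := b - A Xt.
by rewrite [sqnorm (r0 - _)]sqnormB sqnormZ rinnerZr; lra.
Qed.

Lemma le_of_sqr_le_mul (R : realFieldType) (c x y : R) :
  0 <= c -> 0 <= y -> c * x ^+ 2 <= x * y -> c * x <= y.
Proof.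
move=> c0 y0; have [x0 _|x0] := lerP x 0; first exact: le_trans (mulr_ge0_le0 c0 x0) y0.
by rewrite expr2 mulrCA ler_pM2l.
Qed.

(* The numerical constants of the contraction: with d <= 1/25,
   4 d / (1 - d) <= 1/2 and 3 (51/50) / (1 - d) <= 13/2. *)
Lemma admira_constants (R : realFieldType) (d e q xt x1 v : R) :
  0 <= d -> d <= 1 / 25%:R -> 0 <= e -> 0 <= v ->
  q <= 2 * (d * e + 51%:R / 50%:R * v) ->
  (1 - d) * xt <= q + 51%:R / 50%:R * v -> x1 <= 2 * xt ->
  x1 <= 1 / 2%:R * e + 13%:R / 2%:R * v.
Proof.
move=> d0 d1 e0 v0 hq hxt hx1; have d1p : 0 < 1 - d by lra.
by rewrite -(ler_pM2l d1p); nra.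
Qed.

Section ADMiRAError.
Variables (m n p r : nat) (O : 'M[C]_(m, n) -> Prop).
Variable A : {linear 'M[C]_(m, n) -> 'cV[C]_p}.
Variables (d : K) (X0 : 'M[C]_(m, n)) (nu b : 'cV[C]_p).
Hypothesis HO : atom_set O.
Hypothesis d_ge0 : 0 <= d.
Hypothesis d_le : d <= 1 / 25%:R.
Hypothesis rip : forall X, (\rank X <= 4 * r)%N ->
  (1 - d) * sqnorm X <= sqnorm (A X) /\ sqnorm (A X) <= (1 + d) * sqnorm X.
Hypothesis HX0 : (\rank X0 <= r)%N.
Hypothesis Hb : b = A X0 + nu.

Local Notation atoms L := (forall Z, Z \in L -> O Z).

Lemma one_sub_d_gt0 : 0 < 1 - d.
Proof. by rewrite subr_gt0 (le_lt_trans d_le) // mul1r invf_lt1 ?ltr1n. Qed.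

Lemma error_bound_ge0 (x : K) : 0 <= x -> 0 <= d * x + 51%:R / 50%:R * rnorm nu.
Proof. by move=> x0; rewrite addr_ge0 ?mulr_ge0 ?invr_ge0 ?rnorm_ge0. Qed.

Lemma rip_atoms L Y : atoms L -> (size L <= 4 * r)%N -> in_span L Y ->
  (1 - d) * sqnorm Y <= sqnorm (A Y) /\ sqnorm (A Y) <= (1 + d) * sqnorm Y.
Proof.
move=> OL sL sY; apply/rip/(leq_trans _ sL)/(rank_span _ sY) => Z ZL.
by rewrite (proj1 HO Z (OL Z ZL)).2.
Qed.

(* sqrt (1 + 1/25) <= 51/50 *)
Lemma rnorm_A_le L Y : atoms L -> (size L <= 4 * r)%N -> in_span L Y ->
  rnorm (A Y) <= 51%:R / 50%:R * rnorm Y.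
Proof.
move=> OL sL sY; have [_ up] := rip_atoms OL sL sY.
rewrite -(ler_pXn2r (_ : 0 < 2)%N) ?nnegrE ?(divr_ge0, mulr_ge0, rnorm_ge0) //.
have : d * sqnorm Y <= 1 / 25%:R * sqnorm Y by rewrite ler_wpM2r ?sqnorm_ge0.
by rewrite exprMn !sqr_rnorm; have := sqnorm_ge0 Y; lra.
Qed.

Lemma noisy_rinner_le L u w : atoms L -> (size L <= 4 * r)%N ->
  in_span L u -> in_span L w ->
  rinner (A u) (A w) - rinner u w + rinner nu (A w)
    <= rnorm w * (d * rnorm u + 51%:R / 50%:R * rnorm nu).
Proof.
move=> OL sL su sw.
have := rip_rinner_le (fun Y sY => rip_atoms OL sL sY) su sw.
have := rinner_le nu (A w); have := rnorm_A_le OL sL sw.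
have := rnorm_ge0 nu; nra.
Qed.

Lemma proxy_error W R Y' : atoms W -> (size W <= 4 * r)%N -> in_span W R ->
  is_proj W (adjoint A (A R + nu)) Y' ->
  rnorm (Y' - R) <= d * rnorm R + 51%:R / 50%:R * rnorm nu.
Proof.
move=> OW sW sR pY; set e := Y' - R.
have se : in_span W e by apply: spanB => //; case: pY.
have orth := proj_orth pY se.
rewrite rinnerBl /rinner adjointP -/(rinner _ _) rinnerDl in orth.
have noisy := noisy_rinner_le OW sW sR se.
have eE : sqnorm e = rinner Y' e - rinner R e by rewrite -rinnerBl.
rewrite -[rnorm e]mul1r; apply: le_of_sqr_le_mul => //; first exact: error_bound_ge0 (rnorm_ge0 R).
rewrite mul1r sqr_rnorm; lra.
Qed.

Lemma identification_error Xk Psik Psi1 H :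
  admissible O r Psik -> in_span Psik Xk ->
  maximizes_proj O (2 * r) (adjoint A (b - A Xk)) Psi1 ->
  is_proj (Psi1 ++ Psik) X0 H ->
  rnorm (X0 - H) <= 2 * (d * rnorm (X0 - Xk) + 51%:R / 50%:R * rnorm nu).
Proof.
move=> [_ [OPk sPk]] sXk [[_ [OP1 sP1]] max1] pH.
have [L0 [[_ [OL0 sL0]] sX0]] := atom_span_of_rank HO HX0.
pose T := undup (L0 ++ Psik).
have subT : {subset L0 ++ Psik <= T} by move=> Z; rewrite mem_undup.
have OT : atoms T by move=> Z; rewrite mem_undup mem_cat => /orP[/OL0 | /OPk].
have admT : admissible O (2 * r) T.
  split; first exact: undup_uniq.
  split=> //; apply: leq_trans (size_undup _) _.
  by rewrite size_cat mul2n -addnn leq_add.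
set R := X0 - Xk.
have sR : in_span T R by apply/(span_subset subT)/spanB; [apply: span_catl | apply: span_catr].
have OW : atoms (Psi1 ++ T) by move=> Z; rewrite mem_cat => /orP[/OP1 | /OT].
have sW : (size (Psi1 ++ T) <= 4 * r)%N.
  by rewrite size_cat (_ : 4 = 2 + 2)%N // mulnDl leq_add //; case: admT => _ [].
have [Y' pY'] := proj_exists (Psi1 ++ T) (adjoint A (b - A Xk)).
have rA : b - A Xk = A R + nu by rewrite Hb linearB addrAC.
have eY' : rnorm (Y' - R) <= d * rnorm R + 51%:R / 50%:R * rnorm nu.
  by apply: proxy_error OW sW (span_catr _ sR) _; rewrite -rA.
have [G1 pG1] := proj_exists Psi1 Y'; have [G2 pG2] := proj_exists T Y'.
have pG1' : is_proj Psi1 (adjoint A (b - A Xk)) G1.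
  by apply: proj_comp pY' pG1 => Z ZP; rewrite mem_cat ZP.
have pG2' : is_proj T (adjoint A (b - A Xk)) G2.
  by apply: proj_comp pY' pG2 => Z ZT; rewrite mem_cat ZT orbT.
have G21 : rnorm G2 <= rnorm G1 by rewrite -lecR -!fnormE; exact: max1 T admT G1 G2 pG1' pG2'.
have dG1 := proj_residual_le pG1 pG2 G21 sR.
have sXG : in_span (Psi1 ++ Psik) (Xk + G1).
  by apply: spanD; [apply: span_catr | apply: span_catl; case: pG1].
have HG : rnorm (X0 - H) <= rnorm (R - G1).
  by rewrite /R -addrA -opprD rnorm_le (proj_min pH sXG).
apply: le_trans HG _; apply: le_trans (rnorm_triangle R Y' G1) _.
rewrite (rnorm_sym R Y') mulr_natl mulr2n; exact: lerD eY' (le_trans dG1 eY').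
Qed.

Lemma least_squares_error Pt Xt H :
  atoms Pt -> (size Pt <= 3 * r)%N ->
  in_span Pt Xt -> (forall X, in_span Pt X -> vnorm (b - A Xt) <= vnorm (b - A X)) ->
  is_proj Pt X0 H ->
  (1 - d) * rnorm (X0 - Xt) <= rnorm (X0 - H) + 51%:R / 50%:R * rnorm nu.
Proof.
move=> OPt sPt sXt minXt pH.
have [L0 [[_ [OL0 sL0]] sX0]] := atom_span_of_rank HO HX0.
have OL : atoms (Pt ++ L0) by move=> Z; rewrite mem_cat => /orP[/OPt | /OL0].
have sL : (size (Pt ++ L0) <= 4 * r)%N.
  by rewrite size_cat (_ : 4 = 3 + 1)%N // mulnDl mul1n leq_add.
set Q := X0 - H; set E := Xt - H.
have sH : in_span Pt H by case: pH.
have sE : in_span Pt E by apply: spanB.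
have sQ : in_span (Pt ++ L0) Q by apply: spanB; [apply: span_catr | apply: span_catl].
have normal := least_squares_orth sXt minXt sE.
have rE : b - A Xt = A Q - A E + nu.
  by rewrite Hb -linearB /Q /E opprB addrA subrK linearB addrAC.
move/eqP: normal; rewrite rE rinnerDl rinnerBl addrAC subr_eq0 => /eqP AE.
have noisy := noisy_rinner_le OL sL sQ (span_catl _ sE).
rewrite (proj_orth pH sE) subr0 AE in noisy.
have [lo _] := rip_atoms OL sL (span_catl _ sE).
have Ebound : (1 - d) * rnorm E <= d * rnorm Q + 51%:R / 50%:R * rnorm nu.
  apply: le_of_sqr_le_mul; [exact: ltW one_sub_d_gt0 | exact: error_bound_ge0 (rnorm_ge0 Q) |].
  by rewrite sqr_rnorm; apply: le_trans lo noisy.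
have tri : rnorm (X0 - Xt) <= rnorm Q + rnorm E by rewrite (rnorm_sym Xt) rnorm_triangle.
apply: le_trans (ler_wpM2l (ltW one_sub_d_gt0) tri) _.
rewrite mulrDr; apply: le_trans (lerD (lexx _) Ebound) _.
by rewrite addrA -mulrDl subrK mul1r.
Qed.

Lemma pruning_error Xt Psik1 Xk1 :
  maximizes_proj O r Xt Psik1 -> is_proj Psik1 Xt Xk1 ->
  rnorm (X0 - Xk1) <= 2 * rnorm (X0 - Xt).
Proof.
move=> [_ max] pXk1.
have [L0 [admL0 sX0]] := atom_span_of_rank HO HX0.
have [P0 pP0] := proj_exists L0 Xt.
have P01 : rnorm P0 <= rnorm Xk1 by rewrite -lecR -!fnormE; exact: max L0 admL0 _ _ pXk1 pP0.
have := proj_residual_le pXk1 pP0 P01 sX0; rewrite (rnorm_sym Xt X0) => res.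
by apply: le_trans (rnorm_triangle X0 Xt Xk1) _; rewrite mulr_natl mulr2n lerD2l.
Qed.

Lemma admira_step Xk Psik Psi1 Xt Psik1 Xk1 :
  admissible O r Psik -> in_span Psik Xk ->
  maximizes_proj O (2 * r) (adjoint A (b - A Xk)) Psi1 ->
  in_span (Psi1 ++ Psik) Xt ->
  (forall X, in_span (Psi1 ++ Psik) X -> vnorm (b - A Xt) <= vnorm (b - A X)) ->
  maximizes_proj O r Xt Psik1 -> is_proj Psik1 Xt Xk1 ->
  rnorm (X0 - Xk1) <= 1 / 2%:R * rnorm (X0 - Xk) + 13%:R / 2%:R * rnorm nu.
Proof.
move=> admk sXk max1 sXt minXt max2 pXk1.
have [H pH] := proj_exists (Psi1 ++ Psik) X0.
have idf := identification_error admk sXk max1 pH.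
have OPt : atoms (Psi1 ++ Psik).
  by case: max1 admk => [[_ [O1 _]] _] [_ [Ok _]] Z; rewrite mem_cat => /orP[/O1 | /Ok].
have sPt : (size (Psi1 ++ Psik) <= 3 * r)%N.
  case: max1 admk => [[_ [_ s1]] _] [_ [_ sk]].
  by rewrite size_cat (_ : 3 = 2 + 1)%N // mulnDl mul1n leq_add.
have lse := least_squares_error OPt sPt sXt minXt pH.
have pre := pruning_error max2 pXk1.
exact: admira_constants d_ge0 d_le (rnorm_ge0 _) (rnorm_ge0 _) idf lse pre.
Qed.

End ADMiRAError.

Theorem theorem3 (m n p r : nat) (Hm : (0 < m)%N) (Hn : (0 < n)%N)
  (Hp : (0 < p)%N) (Hr : (0 < r)%N)
  (O : 'M[C]_(m, n) -> Prop) (HO : atom_set O)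
  (A : {linear 'M[C]_(m, n) -> 'cV[C]_p})
  (HA : exists d : C, is_rip_const A (4 * r) d /\ d <= 1 / 25%:R)
  (X0 : 'M[C]_(m, n)) (HX0 : (\rank X0 <= r)%N)
  (nu : 'cV[C]_p) (b : 'cV[C]_p) (Hb : b = A X0 + nu)
  (Xhat : nat -> 'M[C]_(m, n)) (Hrun : admira_run O A b r Xhat) :
  (forall k : nat,
     fnorm (X0 - Xhat k.+1)
       <= 1 / 2%:R * fnorm (X0 - Xhat k) + 13%:R / 2%:R * vnorm nu) /\
  (forall k : nat,
     fnorm (X0 - Xhat k)
       <= (1 / 2%:R) ^+ k * fnorm X0 + 13%:R * vnorm nu).
Proof.
case: HA => dC [[dC0 [ripC _]] dC_le]; have rip := rip_ineq_real dC0 ripC.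
have dE := complex_ge0_real dC0; set d := complex.Re dC in rip dE.
have d0 : 0 <= d by rewrite -ler0c -dE.
have d1 : d <= 1 / 25%:R.
  by move: dC_le; rewrite dE -[1 / 25%:R]/(1%:R / 25%:R) real_complex_ratio lecR.
case: Hrun => Psihat [Psi1 [Xtil [Xhat0 [Psihat0 run]]]].
have inv k : admissible O r (Psihat k) /\ in_span (Psihat k) (Xhat k).
  case: k => [|k]; first by rewrite Psihat0 Xhat0; split; [do 2 split | exact: span0].
  by have [_ [_ [[adm _] [sX _]]]] := run k.
have step k : rnorm (X0 - Xhat k.+1)
    <= 1 / 2%:R * rnorm (X0 - Xhat k) + 13%:R / 2%:R * rnorm nu.
  have [max1 [[sXt minXt] [max2 pXk1]]] := run k; have [admk sXk] := inv k.
  exact: (admira_step HO d0 d1 rip HX0 Hb) admk sXk max1 sXt minXt max2 pXk1.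
have decay k : rnorm (X0 - Xhat k) <= (1 / 2%:R) ^+ k * rnorm X0 + 13%:R * rnorm nu.
  elim: k => [|k IH]; first by rewrite Xhat0 subr0 expr0 mul1r lerDl mulr_ge0 ?rnorm_ge0.
  apply: le_trans (step k) _; rewrite exprS -(mulrA _ _ (rnorm X0)).
  move: IH (rnorm_ge0 nu).
  move: (rnorm (X0 - Xhat k)) (rnorm nu) ((1 / 2%:R) ^+ k * rnorm X0) => x v y; lra.
rewrite -[1 / 2%:R]/(1%:R / 2%:R) !real_complex_ratio -(rmorph_nat (real_complex K)).
by split=> k; rewrite !fnormE vnormE fnormE -?rmorphXn -!rmorphM -rmorphD lecR.
Qed.
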